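(* Let $v$ be a typical weight and let $X$ be an initial space such that for every $f\in X$ and $0\le r<1$ the function $f_r(z)=f(rz)$ is in $X$ and $\sup_{0\le r<1}\|f_r\|_X\le C\|f\|_X$ for a constant $C$ independent of $f$. Let $T$ be an intrinsic operator on $\mathcal{H}(\mathbb{D})$ such that $T:X\to H_v$ is bounded and $Tf_r\in H_{v,0}$ for all $f\in X$, $0\le r<1$. Then the following are equivalent: (i) $T:X\to H_v$ is compact; (ii) $T:X\to H_{v,0}$ is compact; (iii) $\lim_{|z|\to1}v(z)\|T^*K_z^H\|=0$.
   Context: $\mathcal{H}(\mathbb{D})$ is the space of holomorphic functions on the unit disk $\mathbb{D}$ with the topology $\tau_{uc}$ of uniform convergence on compact subsets. A linear operator $T$ on $\mathcal{H}(\mathbb{D})$ is intrinsic if it maps $\tau_{uc}$-convergent sequences to $\tau_{uc}$-convergent sequences. An initial space is a Banach space $X\subset\mathcal{H}(\mathbb{D})$ containing the polynomials such that every sequence in the closed unit ball of $X$ has a subsequence converging in $\tau_{uc}$ to some function in $X$. A typical weight is a continuous radial $v:\mathbb{D}\to(0,1]$, non-increasing in $|z|$, with $v(z)\to0$ as $|z|\to1$. $H_v=\{f:\sup_z v(z)|f(z)|<\infty\}$ with that supremum as norm, $H_{v,0}=\{f:\lim_{|z|\to1}v(z)|f(z)|=0\}$ (closed subspace). $K_z^H$ is the point evaluation $g\mapsto g(z)$ on $H_v$ and $T^*:H_v^*\to X^*$ the adjoint of $T:X\to H_v$. *)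

From HB Require Import structures.
From mathcomp Require Import all_boot all_order all_algebra.
From mathcomp Require Import complex.
From mathcomp Require Import all_classical all_reals all_analysis.
Import Order.TTheory GRing.Theory Num.Theory.
Import numFieldNormedType.Exports.
Import Normc.

Set Implicit Arguments.
Unset Strict Implicit.
Unset Printing Implicit Defensive.

Local Open Scope ring_scope.
Local Open Scope classical_set_scope.

(* Complex numbers are R[i] for R : realType; |z| is  normc z : R.
   Functions on the disk are represented by functions R[i] -> R[i];
   only their values on the open unit disk matter. *)

Section Defs.
Variable R : realType.
Local Notation C := R[i].

Definition disk : set C := [set z | normc z < 1].

Definition holomorphic (f : C -> C) : Prop :=
  forall z, disk z -> exists d : C, forall e : R, 0 < e ->
    exists del : R, 0 < del /\
      forall h : C, disk (z + h) -> 0 < normc h -> normc h < del ->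
        normc (f (z + h) - f z - d * h) <= e * normc h.

Definition uc_cvg (fs : nat -> C -> C) (f : C -> C) : Prop :=
  forall K : set C, @compact (R[i] : numFieldType) K -> K `<=` disk ->
    forall e : R, 0 < e -> exists N : nat, forall n : nat, (N <= n)%N ->
      forall z, K z -> normc (fs n z - f z) <= e.

Definition subseq_map (phi : nat -> nat) : Prop :=
  forall m n : nat, (m < n)%N -> (phi m < phi n)%N.

Definition linear_on_H (T : (C -> C) -> C -> C) : Prop :=
  (forall f, holomorphic f -> holomorphic (T f)) /\
  (forall (a : C) f g, holomorphic f -> holomorphic g ->
     forall z, disk z -> T (fun w => a * f w + g w) z = a * T f z + T g z).

Definition intrinsic (T : (C -> C) -> C -> C) : Prop :=
  linear_on_H T /\
  forall (fs : nat -> C -> C) (f : C -> C),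
    (forall n, holomorphic (fs n)) -> holomorphic f -> uc_cvg fs f ->
    exists g : C -> C, uc_cvg (fun n => T (fs n)) g.

Definition banach_subspace (Xs : set (C -> C)) (nX : (C -> C) -> R) : Prop :=
  [/\ Xs `<=` holomorphic,
      Xs (fun _ => 0),
      (forall (a : C) f g, Xs f -> Xs g -> Xs (fun w => a * f w + g w)),
      [/\ (forall f, Xs f -> 0 <= nX f /\ (nX f = 0 <-> forall z, disk z -> f z = 0)),
          (forall (a : C) f, Xs f -> nX (fun w => a * f w) = normc a * nX f) &
          (forall f g, Xs f -> Xs g -> nX (fun w => f w + g w) <= nX f + nX g)] &
      (forall fs : nat -> C -> C, (forall n, Xs (fs n)) ->
         (forall e : R, 0 < e -> exists N : nat, forall m n : nat,
            (N <= m)%N -> (N <= n)%N -> nX (fun w => fs m w - fs n w) <= e) ->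
         exists f, Xs f /\
           (forall e : R, 0 < e -> exists N : nat, forall n : nat,
              (N <= n)%N -> nX (fun w => fs n w - f w) <= e))].

Definition initial_space (Xs : set (C -> C)) (nX : (C -> C) -> R) : Prop :=
  [/\ banach_subspace Xs nX,
      (forall p : {poly C}, Xs (fun z => p.[z])) &
      (forall fs : nat -> C -> C, (forall n, Xs (fs n) /\ nX (fs n) <= 1) ->
         exists phi, subseq_map phi /\
           exists f, Xs f /\ uc_cvg (fun n => fs (phi n)) f)].

Definition typical_weight (v : C -> R) : Prop :=
  [/\ (forall z, disk z -> forall e : R, 0 < e -> exists del : R, 0 < del /\
         forall w, disk w -> normc (w - z) < del -> `|v w - v z| < e),
      (forall z, disk z -> 0 < v z <= 1),
      (forall z w, disk z -> disk w -> normc z = normc w -> v z = v w),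
      (forall z w, disk z -> disk w -> normc z <= normc w -> v w <= v z) &
      (forall e : R, 0 < e -> exists r : R, r < 1 /\
         forall z, disk z -> r < normc z -> v z < e)].

Definition vnorm (v : C -> R) (f : C -> C) : R :=
  sup [set v z * normc (f z) | z in disk].

Definition Hv (v : C -> R) (f : C -> C) : Prop :=
  holomorphic f /\ exists M : R, forall z, disk z -> v z * normc (f z) <= M.

Definition Hv0 (v : C -> R) (f : C -> C) : Prop :=
  holomorphic f /\ forall e : R, 0 < e -> exists r : R, r < 1 /\
    forall z, disk z -> r < normc z -> v z * normc (f z) < e.

Definition dil (r : R) (f : C -> C) : C -> C := fun z => f ((r%:C)%C * z).

Definition bounded_into_Hv (Xs : set (C -> C)) (nX : (C -> C) -> R)
    (v : C -> R) (T : (C -> C) -> C -> C) : Prop :=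
  (forall f, Xs f -> Hv v (T f)) /\
  exists M : R, forall f, Xs f -> vnorm v (T f) <= M * nX f.

(* T : X -> Y (Y = H_v or H_{v,0}, with the H_v norm) is compact:
   T maps X into Y and the image of every sequence of the closed unit ball
   of X has a subsequence converging in norm to an element of Y *)
Definition compact_op (Xs : set (C -> C)) (nX : (C -> C) -> R)
    (v : C -> R) (Y : set (C -> C)) (T : (C -> C) -> C -> C) : Prop :=
  (forall f, Xs f -> Y (T f)) /\
  forall fs : nat -> C -> C, (forall n, Xs (fs n) /\ nX (fs n) <= 1) ->
    exists phi, subseq_map phi /\ exists g, Y g /\
      (fun n => vnorm v (fun w => T (fs (phi n)) w - g w)) @ \oo --> (0 : R).

(* || T^* K_z^H ||_{X^*} = sup_{||f||_X <= 1} |(T f)(z)| *)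
Definition adj_eval_norm (Xs : set (C -> C)) (nX : (C -> C) -> R)
    (T : (C -> C) -> C -> C) (z : C) : R :=
  sup [set normc (T f z) | f in [set f | Xs f /\ nX f <= 1]].

End Defs.

(* Everything happens near the boundary: on compact subsets of the disk, the
   initial-space compactness of the unit ball of X together with intrinsicness of
   T already yields uniform convergence of T f_n, and v(z) ||T^* K_z|| is exactly
   the size of v(z) |T f(z)| over the unit ball.
   (iii) => (i): a subsequence f_n tends to f in tau_uc; then T f_n -> T f uniformly
   on |z| <= r, while for |z| > r, v(z) |T (f_n - f)(z)| <= (||f|| + 2) v(z) ||T^* K_z||.
   (ii) => (iii): otherwise some z_n -> bd D and f_n in the ball have
   v(z_n) |T f_n(z_n)| >= e/2, whereas an H_v-limit g in H_{v,0} of a subsequence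
   of T f_n forces v(z_n) |T f_n(z_n)| < e/2 eventually.
   (i) => (ii): H_{v,0} is closed in H_v, so it suffices that T f is in H_{v,0}.
   The dilations f_r (r -> 1) are bounded in X with T f_r in H_{v,0}; an H_v-limit
   of a subsequence of T f_r lies in H_{v,0}, and it equals T f because f_r -> f
   pointwise, a further subsequence converges in tau_uc, and T is intrinsic. *)

From HB Require Import structures.
From mathcomp Require Import all_boot all_order all_algebra.
From mathcomp Require Import complex.
From mathcomp Require Import all_classical all_reals all_analysis.
From mathcomp Require Import unstable ring lra zify.
Import Order.TTheory GRing.Theory Num.Theory.
Import numFieldNormedType.Exports.
Import Normc.

Set Implicit Arguments.
Unset Strict Implicit.
Unset Printing Implicit Defensive.

Local Open Scope ring_scope.
Local Open Scope classical_set_scope.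
Local Open Scope complex_scope.

Section ComplexPlane.
Variable R : realType.
Local Notation C := R[i].
Local Notation CT := (R[i] : numFieldType).

Lemma normc_ge0 (z : C) : 0 <= normc z.
Proof. by case: z => a b; rewrite /normc sqrtr_ge0. Qed.

Lemma normcR (a : R) : normc (a%:C : C) = `|a|.
Proof. by rewrite /normc /= expr0n /= addr0 sqrtr_sqr. Qed.

Lemma normcB (x y : C) : normc (x - y) = normc (y - x).
Proof. by rewrite -normcN opprB. Qed.

Lemma normc_gt0 (x : C) : x != 0 -> 0 < normc x.
Proof.
move=> x0; rewrite lt_neqAle normc_ge0 andbT eq_sym.
by apply: contra x0 => /eqP/eq0_normc ->.
Qed.

Lemma lerB_normc_dist (x y : C) : `|normc x - normc y| <= normc (x - y).
Proof.
have := le_normcD (x - y) y; have := le_normcD (y - x) x.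
rewrite !subrK normcB ler_norml; lra.
Qed.

(* Balls of [R[i]] have complex radii; the positive ones are real. *)
Lemma nbhs_normcP (x : CT) (P : set CT) :
  nbhs x P <-> exists2 e : R, 0 < e & forall y, normc (x - y) < e -> P y.
Proof.
split=> [/nbhs_ballP [[a b] ab0 Hab] | [e e0 He]].
  have : (0 : C) < a +i* b := ab0; rewrite ltcE /= => /andP[/eqP b0 a0].
  exists a => // y xy; apply: Hab; rewrite b0.
  by rewrite -ball_normE /=; change ((normc (x - y))%:C < a%:C); rewrite ltcR.
have e0' : (0 : C) < e%:C by rewrite ltcR.
apply/nbhs_ballP; exists e%:C => // y; rewrite -ball_normE /= => xy.
by apply: He; rewrite -ltcR; exact: xy.
Qed.

Lemma continuous_realC : continuous (fun a : R => (a%:C : CT)).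
Proof.
move=> x P /nbhs_normcP [e e0 He]; apply/nbhs_ballP; exists e => // y hy.
by apply: He; rewrite -rmorphB normcR.
Qed.

Lemma continuous_complex_of_pair :
  continuous (fun p : R * R => (p.1%:C + 'i%C * p.2%:C : CT)).
Proof.
move=> [a b]; apply: cvgD.
  apply: (@cvg_comp _ _ _ fst (fun a : R => (a%:C : CT)) _ (nbhs a)).
    exact: cvg_fst.
  exact: continuous_realC.
apply: cvgM; first exact: cvg_cst.
apply: (@cvg_comp _ _ _ snd (fun b : R => (b%:C : CT)) _ (nbhs b)).
  exact: cvg_snd.
exact: continuous_realC.
Qed.

Definition cdisk (r : R) : set CT := [set z | normc z <= r].

Lemma closed_cdisk r : closed (cdisk r).
Proof.
move=> x Hx; rewrite /cdisk /= leNgt; apply/negP => xr.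
have [y [yr xy]] : (cdisk r `&` [set y | normc (x - y) < normc x - r]) !=set0.
  by apply/Hx/nbhs_normcP; exists (normc x - r); rewrite ?subr_gt0.
have := le_normcD (x - y) y; rewrite subrK; move: yr xy; rewrite /cdisk /=; lra.
Qed.

Lemma compact_cdisk r : compact (cdisk r).
Proof.
pose sq := `[- `|r|, `|r|] `*` `[- `|r|, `|r|].
apply: (@subclosed_compact _ _ ((fun p : R * R => (p.1%:C + 'i%C * p.2%:C : CT)) @` sq)).
- exact: closed_cdisk.
- apply: continuous_compact.
    by apply: continuous_subspaceT => p; exact: continuous_complex_of_pair.
  exact: compact_setX (@segment_compact _ _ _) (@segment_compact _ _ _).
- case=> a b; rewrite /cdisk /= => ab_r; exists (a, b); last by simpc.
  split=> /=; rewrite in_itv /= -ler_norml -sqrtr_sqr;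
    apply: (le_trans _ (le_trans ab_r (ler_norm r))); apply: ler_wsqrtr.
  - by rewrite lerDl sqr_ge0.
  - by rewrite lerDr sqr_ge0.
Qed.

(* Differentiability at [z] with tolerance 1 gives |f w - f z| <= (|d| + 1) |w - z|. *)
Lemma holomorphic_continuous_at (f : C -> C) z : holomorphic f -> disk z ->
  forall e : R, 0 < e -> exists2 del : R, 0 < del &
    forall w, disk w -> normc (w - z) < del -> normc (f w - f z) < e.
Proof.
move=> hf dz e e0; have [d Hd] := hf z dz.
have [del0 [del00 Hdel]] := Hd 1 ltr01.
have nd0 := normc_ge0 d.
have k0 : 0 < e / (normc d + 1) by apply: divr_gt0 => //; lra.
exists (Num.min del0 (e / (normc d + 1))); first by rewrite lt_min del00 k0.
move=> w dw; rewrite lt_min => /andP[h1 h2].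
have [->|wz] := eqVneq w z; first by rewrite subrr normc0.
have hp : 0 < normc (w - z) by rewrite normc_gt0 // subr_eq0.
have := Hdel (w - z); rewrite addrC subrK mul1r => /(_ dw hp h1) H.
have := le_normcD (f w - f z - d * (w - z)) (d * (w - z)); rewrite subrK normcM.
have : (normc d + 1) * normc (w - z) < e by rewrite mulrC -ltr_pdivlMr //; lra.
have := normc_ge0 (w - z); nra.
Qed.

Lemma holomorphic_bounded_cdisk (f : C -> C) r : holomorphic f -> r < 1 ->
  exists M : R, forall z, normc z <= r -> normc (f z) <= M.
Proof.
move=> hf r1.
have cont : {within cdisk r, continuous (fun z : CT => normc (f z))}.
  apply: continuous_in_subspaceT => x; rewrite inE /cdisk /= => xr.
  have dx : disk x by rewrite /disk /=; lra.
  move=> P /nbhs_ballP [e e0 He]; apply/nbhs_normcP.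
  have [del del0 Hdel] := holomorphic_continuous_at hf dx e0.
  exists (Num.min del (1 - normc x)).
    by rewrite lt_min del0 subr_gt0 (le_lt_trans xr).
  move=> y; rewrite lt_min => /andP[h1 h2]; apply: He.
  have dy : disk y.
    by rewrite /disk /=; have := le_normcD (y - x) x; rewrite subrK normcB; lra.
  apply: le_lt_trans (lerB_normc_dist _ _) _; rewrite normcB.
  by apply: Hdel; rewrite // normcB.
have [M0 [_ HM]] := compact_bounded (continuous_compact cont (@compact_cdisk r)).
exists (M0 + 1) => z zr; apply: le_trans (ler_norm _) _.
by apply: (HM (M0 + 1)); rewrite ?ltrDl //; exists z.
Qed.

End ComplexPlane.

Section Sequences.
Context {R : realType}.
Local Notation C := R[i].
Local Notation CT := (R[i] : numFieldType).

Lemma cvg0_natP (u : nat -> R) : u @ \oo --> (0 : R) <->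
  forall e : R, 0 < e -> exists N : nat, forall n, (N <= n)%N -> `|u n| < e.
Proof.
split=> [/cvgrPdist_lt H e e0 | H].
  by have [N _ HN] := H e e0; exists N => n /HN; rewrite sub0r normrN.
apply/cvgrPdist_lt => e e0; have [N HN] := H e e0.
by exists N => // n /HN; rewrite /= sub0r normrN.
Qed.

Lemma subseq_map_ge (phi : nat -> nat) : subseq_map phi -> forall n, (n <= phi n)%N.
Proof. by move=> sphi; elim=> [|n IH] //; have := sphi n n.+1 (ltnSn n); lia. Qed.

Lemma subseq_map_comp (phi psi : nat -> nat) :
  subseq_map phi -> subseq_map psi -> subseq_map (phi \o psi).
Proof. by move=> sphi spsi m n /spsi /sphi. Qed.

Definition rad (n : nat) : R := 1 - n.+1%:R^-1.

Lemma rad_ge0 n : 0 <= rad n.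
Proof. by rewrite subr_ge0 invf_le1 ?ltr0n // ler1n. Qed.

Lemma rad_lt1 n : rad n < 1.
Proof. by rewrite ltrBlDr ltrDl invr_gt0 ltr0n. Qed.

Lemma rad_le (m n : nat) : (m <= n)%N -> rad m <= rad n.
Proof. by move=> mn; rewrite lerD2l lerN2 lef_pV2 ?posrE ?ltr0n // ler_nat. Qed.

Lemma lt_rad (r : R) : r < 1 -> exists K : nat, r < rad K.
Proof.
move=> r1; have h0 : 0 <= (1 - r)^-1 by rewrite invr_ge0 subr_ge0 ltW.
exists (Num.Def.archi_bound (1 - r)^-1).
have := archi_boundP h0; set K := Num.Def.archi_bound _ => hK.
have : (1 - r)^-1 < K.+1%:R by apply: lt_le_trans hK _; rewrite ler_nat.
rewrite -ltf_pV2 ?posrE ?invr_gt0 ?ltr0n ?subr_gt0 // invrK /rad.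
by set q := K.+1%:R^-1; lra.
Qed.

Definition cvg_at (fs : nat -> C -> C) (f : C -> C) (z : C) : Prop :=
  forall e : R, 0 < e -> exists N : nat, forall n, (N <= n)%N ->
    normc (fs n z - f z) < e.

Lemma cvg_at_subseq (fs : nat -> C -> C) (f : C -> C) z (phi : nat -> nat) :
  subseq_map phi -> cvg_at fs f z -> cvg_at (fs \o phi) f z.
Proof.
move=> sphi H e /H [N HN]; exists N => n Nn.
exact/HN/(leq_trans Nn)/subseq_map_ge.
Qed.

Lemma cvg_at_unique (fs : nat -> C -> C) (f g : C -> C) z :
  cvg_at fs f z -> cvg_at fs g z -> f z = g z.
Proof.
move=> Hf Hg; apply/eqP; rewrite -subr_eq0; apply/eqP/eq0_normc/eqP.
rewrite eq_le normc_ge0 andbT; apply/ler_gtP => e e0.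
have e20 : 0 < e / 2 by rewrite divr_gt0.
have [N1 HN1] := Hf _ e20; have [N2 HN2] := Hg _ e20.
have := HN1 (maxn N1 N2) (leq_maxl _ _); have := HN2 (maxn N1 N2) (leq_maxr _ _).
set a := fs _ z => ag af; rewrite normcB in af.
have := le_normcD (f z - a) (a - g z); rewrite addrA subrK; lra.
Qed.

Lemma uc_cvg_at (fs : nat -> C -> C) (f : C -> C) z :
  uc_cvg fs f -> disk z -> cvg_at fs f z.
Proof.
move=> H dz e e0; have e20 : 0 < e / 2 by rewrite divr_gt0.
have [|N HN] := H [set z] (@compact_set1 CT z) _ _ e20.
  by move=> w ->.
by exists N => n /HN /(_ z erefl) hn; lra.
Qed.

Lemma uc_cvg_eq_disk (fs : nat -> C -> C) (f g : C -> C) :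
  uc_cvg fs f -> (forall z, disk z -> f z = g z) -> uc_cvg fs g.
Proof.
move=> H fg K cK sK e /(H K cK sK) [N HN]; exists N => n Nn z Kz.
by rewrite -fg; [exact: HN | exact: sK].
Qed.

Lemma dil_cvg_at (f : C -> C) z :
  holomorphic f -> disk z -> cvg_at (fun n => dil (rad n) f) f z.
Proof.
move=> hf dz e e0.
have [del del0 Hdel] := holomorphic_continuous_at hf dz e0.
have [K HK] : exists K, 1 - del < rad K by apply: lt_rad; lra.
exists K => n Kn; have := rad_le Kn; have := rad_ge0 n; have := rad_lt1 n.
have z1 : normc z < 1 := dz; have := normc_ge0 z.
move=> z0 r1 r0 Kr; apply: Hdel.
  rewrite /disk /= normcM normcR ger0_norm //.
  by apply: le_lt_trans z1; rewrite ler_piMl // ltW.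
have -> : (rad n)%:C * z - z = (rad n - 1)%:C * z.
  by rewrite [in RHS]rmorphB rmorph1 mulrBl mul1r.
rewrite normcM normcR ler0_norm ?subr_le0 ?ltW //.
have : (1 - rad n) * normc z <= 1 - rad n.
  by apply: ler_piMr; [rewrite subr_ge0; exact: ltW | exact: ltW].
lra.
Qed.

End Sequences.

Section WeightedSupNorm.
Variables (R : realType) (v : R[i] -> R).
Local Notation C := R[i].
Hypothesis v_range : forall z, disk z -> 0 < v z <= 1.

Lemma v_gt0 z : disk z -> 0 < v z.
Proof. by move/v_range/andP=> []. Qed.

Lemma v_ge0 z : disk z -> 0 <= v z.
Proof. by move/v_gt0/ltW. Qed.

Lemma v_le1 z : disk z -> v z <= 1.
Proof. by move/v_range/andP=> []. Qed.

Lemma disk0 : disk (0 : C).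
Proof. by rewrite /disk /= expr0n /= addr0 sqrtr0 ltr01. Qed.

Definition vbounded (h : C -> C) : Prop :=
  exists M : R, forall z, disk z -> v z * normc (h z) <= M.

Lemma Hv_vbounded h : Hv v h -> vbounded h.
Proof. by case. Qed.

Lemma vnorm_ub h z : vbounded h -> disk z -> v z * normc (h z) <= vnorm v h.
Proof.
move=> [M HM] dz; apply: ub_le_sup; last by exists z.
by exists M => _ [w dw <-]; exact: HM.
Qed.

Lemma vnorm_le h b : (forall z, disk z -> v z * normc (h z) <= b) -> vnorm v h <= b.
Proof.
move=> hb; apply: ge_sup; first by exists (v 0 * normc (h 0)), 0; [exact: disk0 |].
by move=> _ [w dw <-]; exact: hb.
Qed.

Lemma vnorm_ge0 h : vbounded h -> 0 <= vnorm v h.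
Proof.
move=> hb; apply: le_trans (vnorm_ub hb disk0).
exact: mulr_ge0 (v_ge0 disk0) (normc_ge0 _).
Qed.

Lemma vnormB f g : vnorm v (fun w => f w - g w) = vnorm v (fun w => g w - f w).
Proof.
rewrite /vnorm; congr sup; apply/seteqP.
by split=> _ [z dz <-]; exists z; rewrite // normcB.
Qed.

Lemma vbounded_sub f g : vbounded f -> vbounded g -> vbounded (fun w => f w - g w).
Proof.
move=> [M1 H1] [M2 H2]; exists (M1 + M2) => z dz.
have := le_normcD (f z) (- g z); rewrite normcN.
have := H1 z dz; have := H2 z dz; have := v_ge0 dz; nra.
Qed.

Lemma vnorm_triangle_at h g z : vbounded h -> vbounded g -> disk z ->
  v z * normc (h z) <= vnorm v (fun w => h w - g w) + v z * normc (g z).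
Proof.
move=> hb gb dz; have := vnorm_ub (vbounded_sub hb gb) dz.
have := le_normcD (h z - g z) (g z); rewrite subrK.
have := v_ge0 dz; nra.
Qed.

Lemma vnorm_cvg_at (hs : nat -> C -> C) g z :
  (forall n, vbounded (hs n)) -> vbounded g ->
  (fun n => vnorm v (fun w => hs n w - g w)) @ \oo --> (0 : R) -> disk z ->
  cvg_at hs g z.
Proof.
move=> hb gb /cvg0_natP H dz e e0.
have [N HN] := H _ (mulr_gt0 (v_gt0 dz) e0).
exists N => n /HN hn; rewrite -(ltr_pM2l (v_gt0 dz)).
apply: le_lt_trans (vnorm_ub (vbounded_sub (hb n) gb) dz) _.
exact: le_lt_trans (ler_norm _) hn.
Qed.

Lemma Hv0_Hv g : Hv0 v g -> Hv v g.
Proof.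
move=> [hg H0]; split => //.
have [r [r1 Hr]] := H0 1 ltr01.
have [M HM] := holomorphic_bounded_cdisk hg r1.
exists (Num.max 1 M) => z dz; rewrite le_max.
have [zr|zr] := leP (normc z) r; last by rewrite ltW ?Hr.
by apply/orP; right; apply: le_trans (HM z zr); rewrite ler_piMl ?normc_ge0 ?v_le1.
Qed.

Lemma Hv0_closed (hs : nat -> C -> C) g : (forall n, Hv0 v (hs n)) -> Hv v g ->
  (fun n => vnorm v (fun w => hs n w - g w)) @ \oo --> (0 : R) -> Hv0 v g.
Proof.
move=> hs0 Hg /cvg0_natP hsg; split; first by case: Hg.
move=> e e0; have e20 : 0 < e / 2 by rewrite divr_gt0.
have [N HN] := hsg _ e20; have [r [r1 Hr]] := (hs0 N).2 _ e20.
exists r; split => // z dz rz.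
have := vnorm_triangle_at (Hv_vbounded Hg) (Hv_vbounded (Hv0_Hv (hs0 N))) dz.
have := Hr z dz rz; have := HN N (leqnn N); rewrite vnormB.
have := ler_norm (vnorm v (fun w => g w - hs N w)); lra.
Qed.

Lemma Hv0_eq_scale (g h : C -> C) (c : R) : holomorphic h -> 0 < c ->
  (forall z, disk z -> g z = c%:C * h z) -> Hv0 v g -> Hv0 v h.
Proof.
move=> hh c0 gh [_ H0]; split => // e e0.
have [r [r1 Hr]] := H0 _ (mulr_gt0 e0 c0).
exists r; split => // z dz rz; have := Hr z dz rz.
by rewrite gh // normcM normcR gtr0_norm // mulrCA [e * c]mulrC ltr_pM2l.
Qed.

End WeightedSupNorm.

Definition vanishes_at_boundary (R : realType) (u : R[i] -> R) : Prop :=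
  forall e : R, 0 < e -> exists r : R, r < 1 /\
    forall z, disk z -> r < normc z -> u z < e.

Section BanachSubspace.
Variables (R : realType) (Xs : set (R[i] -> R[i])) (nX : (R[i] -> R[i]) -> R).
Local Notation C := R[i].
Hypothesis HX : banach_subspace Xs nX.

Lemma Xs_holo f : Xs f -> holomorphic f.
Proof. by case: HX => h _ _ _ _; exact: h. Qed.

Lemma Xs0 : Xs (fun _ => 0).
Proof. by case: HX. Qed.

Lemma Xs_lin a f g : Xs f -> Xs g -> Xs (fun w => a * f w + g w).
Proof. by case: HX => _ _ h _ _; exact: h. Qed.

Lemma nX_ge0 f : Xs f -> 0 <= nX f.
Proof. by case: HX => _ _ _ [h _ _] _ /h []. Qed.

Lemma nX_eq0 f : Xs f -> (forall z, disk z -> f z = 0) -> nX f = 0.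
Proof. by case: HX => _ _ _ [h _ _] _ /h [_ [_ H]] /H. Qed.

Lemma nX0 : nX (fun _ => 0) = 0.
Proof. exact: nX_eq0 Xs0 (fun _ _ => erefl). Qed.

Lemma nX_scale a f : Xs f -> nX (fun w => a * f w) = normc a * nX f.
Proof. by case: HX => _ _ _ [_ h _] _; exact: h. Qed.

Lemma nXD f g : Xs f -> Xs g -> nX (fun w => f w + g w) <= nX f + nX g.
Proof. by case: HX => _ _ _ [_ _ h] _; exact: h. Qed.

Lemma Xs_scale a f : Xs f -> Xs (fun w => a * f w).
Proof.
move=> hf; have := Xs_lin a hf Xs0.
by have -> : (fun w => a * f w + 0) = (fun w => a * f w) by apply: funext => w; rewrite addr0.
Qed.

Lemma Xs_sub f g : Xs f -> Xs g -> Xs (fun w => f w - g w).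
Proof.
move=> hf hg; have := Xs_lin (-1) hg hf.
by have -> : (fun w => -1 * g w + f w) = (fun w => f w - g w) by apply: funext => w; ring.
Qed.

Lemma nXB f g : Xs f -> Xs g -> nX (fun w => f w - g w) <= nX f + nX g.
Proof.
move=> hf hg; have := nXD hf (Xs_scale (-1) hg).
have -> : (fun w => f w + -1 * g w) = (fun w => f w - g w) by apply: funext => w; ring.
by rewrite nX_scale // normcN normc1 mul1r.
Qed.

Section Operator.
Variables (v : R[i] -> R) (T : (R[i] -> R[i]) -> R[i] -> R[i]).
Hypothesis v_range : forall z, disk z -> 0 < v z <= 1.
Hypothesis HT : intrinsic T.
Hypothesis Hb : bounded_into_Hv Xs nX v T.

Lemma T_holo f : Xs f -> holomorphic (T f).
Proof. by case: HT => -[h _] _ /Xs_holo/h. Qed.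

Lemma T_lin a f g z : Xs f -> Xs g -> disk z ->
  T (fun w => a * f w + g w) z = a * T f z + T g z.
Proof. by case: HT => -[_ h] _ hf hg; apply: h; exact: Xs_holo. Qed.

Lemma T_Hv f : Xs f -> Hv v (T f).
Proof. by case: Hb => h _; exact: h. Qed.

Lemma T_vbounded f : Xs f -> vbounded v (T f).
Proof. by move=> /T_Hv []. Qed.

Lemma T_bounded :
  exists2 M : R, 0 <= M & forall f, Xs f -> vnorm v (T f) <= M * nX f.
Proof.
case: Hb => _ [M HM]; exists (Num.max M 0) => [|f hf]; first by rewrite le_max lexx orbT.
by apply: le_trans (HM f hf) _; rewrite ler_wpM2r ?nX_ge0 ?le_max ?lexx.
Qed.

Lemma T_eq0 h : Xs h -> (forall z, disk z -> h z = 0) -> forall z, disk z -> T h z = 0.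
Proof.
move=> hh h0 z dz; have [M M0 HM] := T_bounded.
have := le_trans (vnorm_ub (T_vbounded hh) dz) (HM h hh).
rewrite nX_eq0 // mulr0 pmulr_rle0 ?(v_gt0 v_range) // => Th0.
by apply/eq0_normc/eqP; rewrite eq_le Th0 normc_ge0.
Qed.

Lemma T0 z : disk z -> T (fun _ => 0) z = 0.
Proof. exact: T_eq0 Xs0 (fun _ _ => erefl) z. Qed.

Lemma T_scale a f z : Xs f -> disk z -> T (fun w => a * f w) z = a * T f z.
Proof.
move=> hf dz; have := T_lin a hf Xs0 dz; rewrite T0 // addr0.
by have -> : (fun w => a * f w + 0) = (fun w => a * f w) by apply: funext => w; rewrite addr0.
Qed.

Lemma T_sub f g z : Xs f -> Xs g -> disk z -> T (fun w => f w - g w) z = T f z - T g z.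
Proof.
move=> hf hg dz; have := T_lin (-1) hg hf dz.
have -> : (fun w => -1 * g w + f w) = (fun w => f w - g w) by apply: funext => w; ring.
by move=> ->; ring.
Qed.

(* Intrinsic operators only send uc-convergent sequences to uc-convergent ones;
   interleaving [fs n - f] with the zero sequence forces the limit to be [T f]. *)
Lemma T_uc_cvg fs f : (forall n, Xs (fs n)) -> Xs f -> uc_cvg fs f ->
  uc_cvg (fun n => T (fs n)) (T f).
Proof.
move=> Xfs Xf fsf.
pose k n := if odd n then (fun w => fs n./2 w - f w) else (fun _ : C => 0 : C).
have Xk n : Xs (k n) by rewrite /k; case: ifP => _; [exact: Xs_sub | exact: Xs0].
have k0 : uc_cvg k (fun _ => 0).
  move=> K cK sK e e0; have [N HN] := fsf K cK sK e e0; exists N.*2 => n Nn z Kz.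
  rewrite /k subr0; case: ifP => _; last by rewrite normc0 ltW.
  by apply: HN => //; rewrite -(doubleK N) half_leq.
have [g Hg] := HT.2 k _ (fun n => Xs_holo (Xk n)) (Xs_holo Xs0) k0.
move=> K cK sK e e0; have e20 : 0 < e / 2 by rewrite divr_gt0.
have [N HN] := Hg K cK sK _ e20; exists N => n Nn z Kz.
have dz := sK z Kz.
have := HN n.*2.+1 ltac:(lia) z Kz; have := HN n.*2 ltac:(lia) z Kz.
rewrite /k /= odd_double /= uphalf_double T_sub // T0 // sub0r normcN.
have := le_normcD (T (fs n) z - T f z - g z) (g z); rewrite subrK; lra.
Qed.

Local Notation adj := (adj_eval_norm Xs nX T).

Lemma adj_ub f z : Xs f -> nX f <= 1 -> disk z -> normc (T f z) <= adj z.
Proof.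
move=> hf f1 dz; have [M M0 HM] := T_bounded; apply: ub_le_sup; last by exists f.
exists (M / v z) => _ [g [hg g1] <-].
rewrite ler_pdivlMr ?(v_gt0 v_range) // mulrC.
apply: le_trans (vnorm_ub (T_vbounded hg) dz) (le_trans (HM g hg) _).
by rewrite ler_piMr.
Qed.

Lemma vT_le_adj h c z : Xs h -> 0 < c -> nX h <= c -> disk z ->
  v z * normc (T h z) <= c * (v z * adj z).
Proof.
move=> hh c0 hc dz; have ci : 0 < c^-1 by rewrite invr_gt0.
have n1 : nX (fun w => c^-1%:C * h w) <= 1.
  by rewrite nX_scale // normcR gtr0_norm // mulrC ler_pdivrMr // mul1r.
have := adj_ub (Xs_scale c^-1%:C hh) n1 dz.
rewrite T_scale // normcM normcR gtr0_norm // mulrC ler_pdivrMr // => hT.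
by rewrite mulrCA ler_wpM2l ?(v_ge0 v_range) // mulrC.
Qed.

Lemma adj_witness z a : disk z -> a < v z * adj z ->
  exists f, [/\ Xs f, nX f <= 1 & a < v z * normc (T f z)].
Proof.
move=> dz; apply: contraPP => /forallNP Hno; apply/negP; rewrite -leNgt.
rewrite mulrC -ler_pdivlMr ?(v_gt0 v_range) //.
apply: ge_sup.
  by exists (normc (T (fun _ => 0) z)), (fun _ => 0); rewrite //= nX0; split; [exact: Xs0 |].
move=> _ [f [hf f1] <-]; rewrite ler_pdivlMr ?(v_gt0 v_range) // mulrC leNgt.
by apply/negP => af; apply: (Hno f).
Qed.

Section Equivalence.
Hypothesis Hball : forall fs : nat -> C -> C, (forall n, Xs (fs n) /\ nX (fs n) <= 1) ->
  exists phi, subseq_map phi /\ exists f, Xs f /\ uc_cvg (fun n => fs (phi n)) f.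
Hypothesis Hdil : forall f r, Xs f -> 0 <= r -> r < 1 -> Xs (dil r f).
Hypothesis HC0 : exists C0 : R, forall f r, Xs f -> 0 <= r -> r < 1 ->
  nX (dil r f) <= C0 * nX f.
Hypothesis Hdil0 : forall f r, Xs f -> 0 <= r -> r < 1 -> Hv0 v (T (dil r f)).

Lemma Hv0_T_of_dil_ball f : Xs f -> (forall r, 0 <= r -> r < 1 -> nX (dil r f) <= 1) ->
  compact_op Xs nX v (Hv v) T -> Hv0 v (T f).
Proof.
move=> Xf f_ball [_ Tcpt].
pose fs n := dil (rad n) f.
have Xfs n : Xs (fs n) by apply: Hdil; [exact: Xf | exact: rad_ge0 | exact: rad_lt1].
have ball n : Xs (fs n) /\ nX (fs n) <= 1.
  by split; [exact: Xfs | apply: f_ball; [exact: rad_ge0 | exact: rad_lt1]].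
have [phi [sphi [g [Hg Tfs_g]]]] := Tcpt fs ball.
have Hv0_Tfs n : Hv0 v (T (fs (phi n))) by exact: Hdil0 Xf (rad_ge0 _) (rad_lt1 _).
have Hv0g : Hv0 v g := Hv0_closed v_range Hv0_Tfs Hg Tfs_g.
have [psi [spsi [f' [Xf' fs_f']]]] := Hball (fun n => ball (phi n)).
have fs_f : uc_cvg (fs \o phi \o psi) f.
  apply: (uc_cvg_eq_disk fs_f') => z dz.
  apply: cvg_at_unique (uc_cvg_at fs_f' dz) _.
  exact (cvg_at_subseq (subseq_map_comp sphi spsi) (dil_cvg_at (Xs_holo Xf) dz)).
have gTf z : disk z -> g z = T f z.
  move=> dz; have Tfs_f := uc_cvg_at (T_uc_cvg (fun n => Xfs (phi (psi n))) Xf fs_f) dz.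
  apply: (cvg_at_unique _ Tfs_f).
  apply: (cvg_at_subseq (fs := fun n => T (fs (phi n))) spsi).
  have Tfs_bd n : vbounded v (T (fs (phi n))) by exact: T_vbounded.
  exact (vnorm_cvg_at v_range Tfs_bd (Hv_vbounded Hg) Tfs_g dz).
apply: (Hv0_eq_scale (T_holo Xf) ltr01 _ Hv0g) => z dz.
by rewrite rmorph1 mul1r gTf.
Qed.

Lemma Hv0_T_of_compact_Hv : compact_op Xs nX v (Hv v) T -> forall f, Xs f -> Hv0 v (T f).
Proof.
move=> Tcpt f Xf; have [C0 HC] := HC0.
have [c c0 c_small] : exists2 c : R, 0 < c & c * (`|C0| * nX f) <= 1.
  have k0 : 0 < `|C0| * nX f + 1 by rewrite ltr_pwDr ?mulr_ge0 ?nX_ge0.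
  exists (`|C0| * nX f + 1)^-1; first by rewrite invr_gt0.
  by rewrite mulrC ler_pdivrMr // mul1r lerDl.
have : Hv0 v (T (fun w => c%:C * f w)).
  apply: Hv0_T_of_dil_ball (Xs_scale _ Xf) _ Tcpt => r r0 r1.
  rewrite [dil _ _](_ : _ = fun w => c%:C * dil r f w) //.
  rewrite nX_scale; last exact: Hdil.
  rewrite normcR gtr0_norm //; apply: le_trans c_small.
  apply: ler_wpM2l; first exact: ltW.
  apply: le_trans (HC f r Xf r0 r1) _.
  by apply: ler_wpM2r; [exact: nX_ge0 | exact: ler_norm].
by apply: Hv0_eq_scale (T_holo Xf) c0 _ => z dz; rewrite T_scale.
Qed.

Lemma compact_Hv0_of_compact_Hv :
  compact_op Xs nX v (Hv v) T -> compact_op Xs nX v (Hv0 v) T.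
Proof.
move=> Tcpt; split=> [|fs ball]; first exact: Hv0_T_of_compact_Hv.
have [phi [sphi [g [Hg Tfs_g]]]] := Tcpt.2 fs ball.
exists phi; split => //; exists g; split => //.
have Hv0_Tfs n : Hv0 v (T (fs (phi n))).
  by apply: Hv0_T_of_compact_Hv; case: (ball (phi n)).
exact (Hv0_closed v_range Hv0_Tfs Hg Tfs_g).
Qed.

Lemma adj_vanishes_of_compact_Hv0 :
  compact_op Xs nX v (Hv0 v) T -> vanishes_at_boundary (fun z => v z * adj z).
Proof.
move=> [_ Tcpt] e e0; apply: contrapT => Hneg.
have witness n : exists p : C * (C -> C), [/\ disk p.1, rad n < normc p.1,
    Xs p.2, nX p.2 <= 1 & e / 2 < v p.1 * normc (T p.2 p.1)].
  apply: contrapT => Hn; apply: Hneg; exists (rad n); split; first exact: rad_lt1.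
  move=> z dz rz; rewrite ltNge; apply/negP => ez.
  have [|f [Xf f1 ef]] := adj_witness (a := e / 2) dz; first by lra.
  by apply: Hn; exists (z, f).
have [p Hp] := choice witness.
have ball n : Xs (p n).2 /\ nX (p n).2 <= 1 by case: (Hp n).
have [phi [sphi [g [Hv0g Tg]]]] := Tcpt _ ball.
have e40 : 0 < e / 4 by rewrite divr_gt0.
have [r [r1 Hr]] := Hv0g.2 _ e40.
have [N HN] := (cvg0_natP _).1 Tg _ e40.
have [K HK] := lt_rad r1.
pose m := maxn N K.
have [dz rz Xf _ big] := Hp (phi m).
have rz' : r < normc (p (phi m)).1.
  apply: lt_le_trans HK (le_trans (rad_le _) (ltW rz)).
  exact: leq_trans (leq_maxr N K) (subseq_map_ge sphi m).
have gHv := Hv_vbounded (Hv0_Hv v_range Hv0g).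
have := vnorm_triangle_at v_range (T_vbounded Xf) gHv dz.
have := HN m (leq_maxl N K); have := Hr _ dz rz'.
have := ler_norm (vnorm v (fun w => T (p (phi m)).2 w - g w)); lra.
Qed.

Lemma compact_Hv_of_adj_vanishes :
  vanishes_at_boundary (fun z => v z * adj z) -> compact_op Xs nX v (Hv v) T.
Proof.
move=> adj0; split=> [|fs ball]; first exact: T_Hv.
have [phi [sphi [f [Xf fs_f]]]] := Hball ball.
have Xfs n : Xs (fs (phi n)) by case: (ball (phi n)).
exists phi; split => //; exists (T f); split; first exact: T_Hv.
apply/cvg0_natP => e e0; have e20 : 0 < e / 2 by rewrite divr_gt0.
pose c := nX f + 2.
have c0 : 0 < c by rewrite /c; have := nX_ge0 Xf; lra.
have [r [r1 Hr]] := adj0 _ (divr_gt0 e20 c0).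
have cdisk_disk : cdisk r `<=` @disk R by move=> z; rewrite /cdisk /disk /=; lra.
have [N HN] := T_uc_cvg Xfs Xf fs_f (compact_cdisk (r := r)) cdisk_disk e20.
exists N => n Nn.
rewrite ger0_norm; last first.
  exact (vnorm_ge0 v_range (vbounded_sub v_range (T_vbounded (Xfs n)) (T_vbounded Xf))).
have half_e : e / 2 < e by lra.
apply: le_lt_trans _ half_e.
apply: vnorm_le => z dz; have [zr|zr] := leP (normc z) r.
  by apply: le_trans (HN n Nn z zr); rewrite ler_piMl ?normc_ge0 ?v_le1.
have hc : nX (fun w => fs (phi n) w - f w) <= c.
  by apply: le_trans (nXB (Xfs n) Xf) _; have := (ball (phi n)).2; rewrite /c; lra.
rewrite -T_sub //; apply: le_trans (vT_le_adj (Xs_sub (Xfs n) Xf) c0 hc dz) _.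
by rewrite mulrC -ler_pdivlMr //; exact: ltW (Hr z dz zr).
Qed.

End Equivalence.

End Operator.

End BanachSubspace.

Theorem theorem3p4 (R : realType) (v : R[i] -> R) (Xs : set (R[i] -> R[i]))
  (nX : (R[i] -> R[i]) -> R) (T : (R[i] -> R[i]) -> R[i] -> R[i]) :
  typical_weight v ->
  initial_space Xs nX ->
  (forall f r, Xs f -> 0 <= r -> r < 1 -> Xs (dil r f)) ->
  (exists C0 : R, forall f r, Xs f -> 0 <= r -> r < 1 ->
     nX (dil r f) <= C0 * nX f) ->
  intrinsic T ->
  bounded_into_Hv Xs nX v T ->
  (forall f r, Xs f -> 0 <= r -> r < 1 -> Hv0 v (T (dil r f))) ->
  [<-> compact_op Xs nX v (Hv v) T;
       compact_op Xs nX v (Hv0 v) T;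
       forall e : R, 0 < e -> exists r : R, r < 1 /\
         forall z, disk z -> r < normc z -> v z * adj_eval_norm Xs nX T z < e].
Proof.
move=> [_ v_range _ _ _] [HX _ Hball] Hdil HC0 HT Hb Hdil0.
split; [|split].
- by apply: compact_Hv0_of_compact_Hv.
- by apply: adj_vanishes_of_compact_Hv0.
- by apply: compact_Hv_of_adj_vanishes.
Qed.
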